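(* Let $A$ be a JBW algebra, let $p,q\in A$ be nonzero projections with $p\circ q=0$, and let $z\in A$ be a nonzero projection different from $p$ and from $q$. Then $z=p+q$ if and only if the linear span of $\{p,q,z\}$ is a two-dimensional associative subalgebra of $A$.
   Context: A JB algebra is a real Banach algebra $(A,\circ)$ with a commutative product satisfying $a\circ(b\circ a^2)=(a\circ b)\circ a^2$, $\|a^2\|\le\|a^2+b^2\|$, $\|a\|^2=\|a^2\|$; a JBW algebra is a JB algebra that is a dual Banach space. A projection is an element $p$ with $p\circ p=p$. *)

From HB Require Import structures.
From mathcomp Require Import all_boot all_order all_algebra.
From mathcomp Require Import all_classical all_reals all_analysis.
Set Implicit Arguments. Unset Strict Implicit. Unset Printing Implicit Defensive.
Import Order.TTheory GRing.Theory Num.Theory.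
Import numFieldNormedType.Exports.
Local Open Scope classical_set_scope.
Local Open Scope ring_scope.

Record JBalgebra (R : realType) (A : completeNormedModType R) := {
  jmul : A -> A -> A;
  jmul_linear : forall (c : R) (x y w : A),
      jmul (c *: x + y) w = c *: jmul x w + jmul y w;
  jmul_comm : forall x y : A, jmul x y = jmul y x;
  jmul_norm : forall x y : A, `|jmul x y| <= `|x| * `|y|;
  jmul_jordan : forall a b : A,
      jmul a (jmul b (jmul a a)) = jmul (jmul a b) (jmul a a);
  jmul_norm_sq_le : forall a b : A,
      `|jmul a a| <= `|jmul a a + jmul b b|;
  jmul_norm_sq : forall a : A, `|a| ^+ 2 = `|jmul a a|
}.

(* A is a dual Banach space: there is a normed space X such that A is
   isometrically (linearly) isomorphic to the dual X^* of bounded linear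
   functionals on X, the norm on X^* being the usual operator norm. *)
Definition dual_Banach_space (R : realType) (A : completeNormedModType R) : Prop :=
  exists (X : normedModType R) (f : A -> X -> R),
    (forall a (c : R) (x y : X), f a (c *: x + y) = c * f a x + f a y) /\
    (forall (c : R) (a b : A) x, f (c *: a + b) x = c * f a x + f b x) /\
    (forall a x, `|f a x| <= `|a| * `|x|) /\
    (forall a, `|a| = sup [set `|f a x| | x in [set x : X | `|x| <= 1]]) /\
    (forall g : X -> R,
        (forall (c : R) (x y : X), g (c *: x + y) = c * g x + g y) ->
        (exists M : R, forall x, `|g x| <= M * `|x|) ->
        exists a : A, forall x, f a x = g x).

Definition JBW_algebra (R : realType) (A : completeNormedModType R)
    (J : JBalgebra A) : Prop := dual_Banach_space A.

Definition is_projection (R : realType) (A : completeNormedModType R)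
    (J : JBalgebra A) (p : A) : Prop := jmul J p p = p.

Definition span3 (R : realType) (A : completeNormedModType R) (p q z : A) : set A :=
  [set x | exists a b c : R, x = a *: p + b *: q + c *: z].

Definition is_subalgebra (R : realType) (A : completeNormedModType R)
    (J : JBalgebra A) (S : set A) : Prop :=
  S 0 /\ (forall (c : R) x y, S x -> S y -> S (c *: x + y)) /\
  (forall x y, S x -> S y -> S (jmul J x y)).

Definition is_associative_on (R : realType) (A : completeNormedModType R)
    (J : JBalgebra A) (S : set A) : Prop :=
  forall x y w, S x -> S y -> S w ->
    jmul J (jmul J x y) w = jmul J x (jmul J y w).

Definition dim2 (R : realType) (A : completeNormedModType R) (S : set A) : Prop :=
  exists u v : A, S u /\ S v /\
    (forall a b : R, a *: u + b *: v = 0 -> a = 0 /\ b = 0) /\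
    (forall x, S x -> exists a b : R, x = a *: u + b *: v).

From HB Require Import structures.
From mathcomp Require Import all_boot all_order all_algebra.
From mathcomp Require Import all_classical all_reals all_analysis.
From mathcomp Require Import ring.
Set Implicit Arguments. Unset Strict Implicit. Unset Printing Implicit Defensive.
Import Order.TTheory GRing.Theory Num.Theory.
Import numFieldNormedType.Exports.
Local Open Scope classical_set_scope.
Local Open Scope ring_scope.

(* Two nonzero orthogonal projections p, q are linearly independent, and on
   span{p, q} the Jordan product acts coordinatewise, (s p + t q)(s' p + t' q)
   = s s' p + t t' q; so span{p, q} is a two-dimensional associative
   subalgebra, and span{p, q, p + q} is this span.  Conversely, if
   span{p, q, z} is two-dimensional, the independent vectors p, q span it, so
   z = a p + b q; z being a projection forces a, b to be idempotent reals,
   i.e. in {0, 1}, and of the four resulting choices only z = p + q is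
   compatible with z being distinct from 0, p and q.  Neither the norm nor
   the JBW hypothesis plays any role. *)

Lemma idempotent_eq01 (K : idomainType) (x : K) : x * x = x -> x = 0 \/ x = 1.
Proof.
move=> xx; have /eqP : x * (x - 1) = 0 by rewrite mulrBr mulr1 xx subrr.
by rewrite mulf_eq0 subr_eq0 => /orP[] /eqP ->; [left | right].
Qed.

Section TwoVectors.
Variables (K : fieldType) (V : lmodType K).

Definition span2 (u v : V) : set V := [set x | exists s t : K, x = s *: u + t *: v].

Definition free2 (u v : V) : Prop :=
  forall s t : K, s *: u + t *: v = 0 -> s = 0 /\ t = 0.

Lemma scale_comb2 (u v : V) c s t c' s' t' :
  c *: (s *: u + t *: v) + c' *: (s' *: u + t' *: v) =
  (c * s + c' * s') *: u + (c * t + c' * t') *: v.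
Proof. by rewrite !scalerDr !scalerA !scalerDl addrACA. Qed.

Lemma free2_neq0l (u v : V) : free2 u v -> u != 0.
Proof.
move=> free_uv; apply/eqP => u0.
have [] := free_uv 1 0; first by rewrite u0 scaler0 scale0r addr0.
by move/eqP; rewrite oner_eq0.
Qed.

(* Cramer's rule: p = a1 u + b1 v and q = a2 u + b2 v invert as soon as the
   determinant d is nonzero, and d = 0 would give the relations
   b2 p - b1 q = 0 and - a2 p + a1 q = 0. *)
Lemma free2_span2_sub (u v p q : V) :
  free2 p q -> span2 u v p -> span2 u v q -> span2 u v `<=` span2 p q.
Proof.
move=> free_pq [a1 [b1 def_p]] [a2 [b2 def_q]] x [s [t ->]].
pose d := a1 * b2 - a2 * b1.
have d_neq0 : d != 0.
  apply/eqP => d0.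
  have [_ b1_0] : b2 = 0 /\ - b1 = 0.
    apply: free_pq; rewrite def_p def_q scale_comb2.
    have -> : b2 * a1 + - b1 * a2 = d by rewrite /d; ring.
    have -> : b2 * b1 + - b1 * b2 = 0 by ring.
    by rewrite d0 !scale0r addr0.
  have [_ a1_0] : - a2 = 0 /\ a1 = 0.
    apply: free_pq; rewrite def_p def_q scale_comb2.
    have -> : - a2 * b1 + a1 * b2 = d by rewrite /d; ring.
    have -> : - a2 * a1 + a1 * a2 = 0 by ring.
    by rewrite d0 !scale0r addr0.
  move/eqP: b1_0; rewrite oppr_eq0 => /eqP b1_0.
  by move: (free2_neq0l free_pq); rewrite def_p a1_0 b1_0 !scale0r addr0 eqxx.
exists ((s * b2 - t * a2) / d), ((t * a1 - s * b1) / d).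
by rewrite def_p def_q scale_comb2; congr (_ *: _ + _ *: _); rewrite /d; field.
Qed.

End TwoVectors.

Section JordanProduct.
Variables (R : realType) (A : completeNormedModType R) (J : JBalgebra A).

Lemma jmul0l w : jmul J 0 w = 0.
Proof.
have := jmul_linear J 1 0 0 w; rewrite scaler0 addr0 scale1r => h.
by apply/(addrI (jmul J 0 w)); rewrite addr0 -h.
Qed.

Lemma jmulZl c x w : jmul J (c *: x) w = c *: jmul J x w.
Proof. by have := jmul_linear J c x 0 w; rewrite addr0 jmul0l addr0. Qed.

Lemma jmulDl x y w : jmul J (x + y) w = jmul J x w + jmul J y w.
Proof. by have := jmul_linear J 1 x y w; rewrite !scale1r. Qed.

Lemma jmulZr c x w : jmul J w (c *: x) = c *: jmul J w x.
Proof. by rewrite jmul_comm jmulZl jmul_comm. Qed.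

Lemma jmulDr x y w : jmul J w (x + y) = jmul J w x + jmul J w y.
Proof. by rewrite jmul_comm jmulDl !(jmul_comm J w). Qed.

Lemma span3_addr (p q : A) : span3 p q (p + q) = span2 p q.
Proof.
rewrite eqEsubset; split => x.
- by case=> a [b [c ->]]; exists (a + c), (b + c); rewrite scalerDr !scalerDl addrACA.
- by case=> s [t ->]; exists s, t, 0; rewrite scale0r addr0.
Qed.

Variables (p q : A).
Hypotheses (pp : is_projection J p) (qq : is_projection J q)
  (pq : jmul J p q = 0).

Lemma jmul_span2 s t s' t' :
  jmul J (s *: p + t *: q) (s' *: p + t' *: q) = (s * s') *: p + (t * t') *: q.
Proof.
rewrite jmulDl !jmulZl !jmulDr !jmulZr pp qq pq jmul_comm pq.
by rewrite !scaler0 addr0 add0r !scalerA.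
Qed.

Hypotheses (p_neq0 : p != 0) (q_neq0 : q != 0).

Lemma orthogonal_projections_free2 : free2 p q.
Proof.
move=> s t st0.
have /eqP : jmul J (s *: p + t *: q) (1 *: p + 0 *: q) = 0 by rewrite st0 jmul0l.
have /eqP : jmul J (s *: p + t *: q) (0 *: p + 1 *: q) = 0 by rewrite st0 jmul0l.
rewrite !jmul_span2 !mulr0 !mulr1 !scale0r addr0 add0r !scaler_eq0.
by rewrite (negbTE p_neq0) (negbTE q_neq0) !orbF => /eqP -> /eqP ->.
Qed.

Lemma span2_subalgebra : is_subalgebra J (span2 p q).
Proof.
split; [|split].
- by exists 0, 0; rewrite !scale0r addr0.
- move=> c x y [s [t ->]] [s' [t' ->]].
  by exists (c * s + s'), (c * t + t'); rewrite scalerDr !scalerA !scalerDl addrACA.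
- by move=> x y [s [t ->]] [s' [t' ->]]; exists (s * s'), (t * t'); apply: jmul_span2.
Qed.

Lemma span2_associative : is_associative_on J (span2 p q).
Proof.
by move=> x y w [s [t ->]] [s' [t' ->]] [s'' [t'' ->]]; rewrite !jmul_span2 !mulrA.
Qed.

Lemma span2_dim2 : dim2 (span2 p q).
Proof.
exists p, q; split; [|split; [|split]].
- by exists 1, 0; rewrite scale0r scale1r addr0.
- by exists 0, 1; rewrite scale0r scale1r add0r.
- exact: orthogonal_projections_free2.
- by move=> x [s [t ->]]; exists s, t.
Qed.

Lemma projection_span2 s t : is_projection J (s *: p + t *: q) ->
  (s = 0 \/ s = 1) /\ (t = 0 \/ t = 1).
Proof.
rewrite /is_projection jmul_span2 => /eqP; rewrite -subr_eq0 opprD addrACA.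
rewrite -!scalerBl => /eqP /orthogonal_projections_free2 [/eqP ss /eqP tt].
by move: ss tt; rewrite !subr_eq0 => /eqP/idempotent_eq01 ? /eqP/idempotent_eq01.
Qed.

End JordanProduct.
Theorem lemma3p4 (R : realType) (A : completeNormedModType R) (J : JBalgebra A)
  (hJBW : JBW_algebra J) (p q z : A) :
  is_projection J p -> p != 0 ->
  is_projection J q -> q != 0 ->
  jmul J p q = 0 ->
  is_projection J z -> z != 0 -> z != p -> z != q ->
  (z = p + q <->
   [/\ is_subalgebra J (span3 p q z),
       is_associative_on J (span3 p q z)
     & dim2 (span3 p q z)]).
Proof.
move=> pp p_neq0 qq q_neq0 pq zz z_neq0 z_neq_p z_neq_q; split.
  move=> ->; rewrite span3_addr.
  by split; [exact: span2_subalgebra pp qq pq | exact: span2_associative pp qq pq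
            | exact: span2_dim2 pp qq pq p_neq0 q_neq0].
case=> _ _ [u [v [_ [_ [_ span3_sub]]]]].
have free_pq := orthogonal_projections_free2 pp qq pq p_neq0 q_neq0.
have [s [t ez]] : span2 p q z.
  apply: (free2_span2_sub free_pq); apply: span3_sub.
  - by exists 1, 0, 0; rewrite !scale0r !addr0 scale1r.
  - by exists 0, 1, 0; rewrite !scale0r addr0 add0r scale1r.
  - by exists 0, 0, 1; rewrite !scale0r !add0r scale1r.
move: zz z_neq0 z_neq_p z_neq_q; rewrite ez => zz.
have [[] -> [] ->] := projection_span2 pp qq pq p_neq0 q_neq0 zz;
  by rewrite ?scale0r ?scale1r ?addr0 ?add0r ?eqxx.
Qed.
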